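(* Let $G=(V,D,B)$ be a mixed graph, $v\in V$, and suppose $W\subseteq V$ satisfies the weak half-trek criterion with respect to $v$. Then there exists a set $Y\subseteq V$ satisfying the half-trek criterion with respect to $v$ such that $Y\cap\mathrm{htr}(v)=W\cap\mathrm{htr}(v)$.
   Context: A mixed graph is $G=(V,D,B)$ with $V=[m]$, $D\subseteq V\times V$ directed edges $v\to w$, $B$ symmetric set of bidirected edges $v\leftrightarrow w$, no self-loops. $\mathrm{pa}(v)=\{w:w\to v\in D\}$, $\mathrm{sib}(v)=\{w:w\leftrightarrow v\in B\}$. A path is a sequence of edges of $D\cup B$ connecting consecutive nodes (not necessarily simple; directed edges may be traversed either way). A trek from $v$ to $w$ is a path of the form $v=v^L_l\leftarrow\cdots\leftarrow v^L_0\leftrightarrow v^R_0\to\cdots\to v^R_r=w$ with $\mathrm{Left}=\{v^L_0,\dots,v^L_l\}$, $\mathrm{Right}=\{v^R_0,\dots,v^R_r\}$, or $v=v^L_l\leftarrow\cdots\leftarrow v^L_1\leftarrow v^T\to v^R_1\to\cdots\to v^R_r=w$ ($l,r\ge0$) with $\mathrm{Left}=\{v^T,v^L_1,\dots,v^L_l\}$, $\mathrm{Right}=\{v^T,v^R_1,\dots,v^R_r\}$. A half-trek is a trek with $|\mathrm{Left}|=1$. A system of treks from $X$ to $Y$ is a set of treks with distinct sources forming $X$ and distinct targets forming $Y$; it has no sided intersection if the Left sets are pairwise disjoint and the Right sets are pairwise disjoint. $\mathrm{htr}(v)$ is the set of $w\in V\setminus(\{v\}\cup\mathrm{sib}(v))$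 reachable from $v$ by a half-trek. $Y$ satisfies the half-trek criterion w.r.t. $v$ if (i) $|Y|=|\mathrm{pa}(v)|$, (ii) $Y\cap(\{v\}\cup\mathrm{sib}(v))=\emptyset$, (iii) there is a system of half-treks with no sided intersection from $Y$ to $\mathrm{pa}(v)$. $Y$ satisfies the weak half-trek criterion w.r.t. $v$ if (i) and (ii) hold and (iii') there is a system of treks with no sided intersection from $Y$ to $\mathrm{pa}(v)$ in which, for every $w\in Y\cap\mathrm{htr}(v)$, the trek with source $w$ is a half-trek. *)

From mathcomp Require Import all_boot.
From Stdlib Require Lists.List.
Set Implicit Arguments.
Unset Strict Implicit.
Unset Printing Implicit Defensive.

(* A mixed graph on V = 'I_m: directed edges D (D w v means w -> v),
   symmetric bidirected edges B, no self-loops. *)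
Record mixed_graph (m : nat) := MixedGraph {
  Dir : rel 'I_m;
  Bid : rel 'I_m;
  Bid_sym : forall v w, Bid v w = Bid w v;
  Dir_irrefl : forall v, ~~ Dir v v;
  Bid_irrefl : forall v, ~~ Bid v v
}.

Section Treks.
Variables (m : nat) (G : mixed_graph m).
Local Notation V := 'I_m.

Definition pa (v : V) : {set V} := [set w | Dir G w v].
Definition sib (v : V) : {set V} := [set w | Bid G w v].

(* A trek, given by its node sequences.
   - TBi l0 ls r0 rs : v = last l0 ls <- ... <- l0 <-> r0 -> ... -> last r0 rs
     (ls = [v^L_1; ...; v^L_l], rs = [v^R_1; ...; v^R_r]);
   - TTop t ls rs : last t ls <- ... <- t -> ... -> last t rs. *)
Inductive trek : Type :=
  | TBi of V & seq V & V & seq V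
  | TTop of V & seq V & seq V.

Definition is_trek (tr : trek) : bool :=
  match tr with
  | TBi l0 ls r0 rs => [&& Bid G l0 r0, path (Dir G) l0 ls & path (Dir G) r0 rs]
  | TTop t ls rs => path (Dir G) t ls && path (Dir G) t rs
  end.

Definition trek_source (tr : trek) : V :=
  match tr with TBi l0 ls _ _ => last l0 ls | TTop t ls _ => last t ls end.

Definition trek_target (tr : trek) : V :=
  match tr with TBi _ _ r0 rs => last r0 rs | TTop t _ rs => last t rs end.

Definition Left (tr : trek) : {set V} :=
  match tr with TBi l0 ls _ _ => [set x in l0 :: ls] | TTop t ls _ => [set x in t :: ls] end.

Definition Right (tr : trek) : {set V} :=
  match tr with TBi _ _ r0 rs => [set x in r0 :: rs] | TTop t _ rs => [set x in t :: rs] end.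

Definition is_half_trek (tr : trek) : bool := is_trek tr && (#|Left tr| == 1).

Definition htr (v w : V) : Prop :=
  w \notin v |: sib v /\
  exists tr, [/\ is_half_trek tr, trek_source tr = v & trek_target tr = w].

Definition trek_system (ts : seq trek) (X Y : {set V}) : Prop :=
  [/\ all is_trek ts,
      uniq (map trek_source ts), [set x in map trek_source ts] = X,
      uniq (map trek_target ts) & [set x in map trek_target ts] = Y].

Definition no_sided_intersection (ts : seq trek) : bool :=
  pairwise (fun a b => [disjoint Left a & Left b] && [disjoint Right a & Right b]) ts.

Definition HTC (Y : {set V}) (v : V) : Prop :=
  [/\ #|Y| = #|pa v|,
      [disjoint Y & v |: sib v] &
      exists ts, [/\ trek_system ts Y (pa v), all is_half_trek ts
                   & no_sided_intersection ts]].

Definition weak_HTC (Y : {set V}) (v : V) : Prop :=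
  [/\ #|Y| = #|pa v|,
      [disjoint Y & v |: sib v] &
      exists ts, [/\ trek_system ts Y (pa v), no_sided_intersection ts
                   & forall tr, Stdlib.Lists.List.In tr ts ->
                       htr v (trek_source tr) -> is_half_trek tr]].
End Treks.

(* Truncate every
   trek to its top: drop the left tail, keeping the top node and the whole
   right part.  The truncated treks are half-treks, their Left sets shrink and
   their Right sets are unchanged, so they still form a system without sided
   intersection, now from the set Y of tops to pa(v); the tops are distinct
   because each top lies in its (pairwise disjoint) Left set.

   The key observation: if the top of a trek of ts is reachable from v by a
   half-trek, then that trek is itself a half-trek.  Otherwise its source is
   reachable too (follow the left tail downwards), lies in W and so outside
   {v} ∪ sib(v), i.e. lies in htr(v), and the weak criterion forces a
   half-trek.  Consequently tops in {v} ∪ sib(v) or in htr(v) are sources in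
   W, which gives both the disjointness condition for Y and the equality
   Y ∩ htr(v) = W ∩ htr(v). *)

From mathcomp Require Import all_boot.
From Stdlib Require Lists.List.

Set Implicit Arguments.
Unset Strict Implicit.
Unset Printing Implicit Defensive.

(* Trek systems are sequences of treks, a type without decidable equality, so
   membership of a trek is the propositional [List.In]; these facts relate it
   to boolean membership in mapped sequences. *)
Section ListMembership.
Variables (T : Type) (U : eqType).

Lemma In_mem_map (f : T -> U) s x : List.In x s -> f x \in map f s.
Proof. by elim: s => //= a s IH [->|/IH hx]; rewrite inE ?eqxx ?hx ?orbT. Qed.

Lemma mem_map_In (f : T -> U) s y :
  y \in map f s -> exists2 x, List.In x s & y = f x.
Proof.
elim: s => //= a s IH; rewrite inE => /orP[/eqP->|/IH[x hx ->]].
- by exists a; [left|].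
- by exists x; [right|].
Qed.

Lemma all_In (p : pred T) s x : all p s -> List.In x s -> p x.
Proof. by elim: s => //= a s IH /andP[pa ps] [<-|/IH]; last exact. Qed.

End ListMembership.

Section Truncation.
Variables (m : nat) (G : mixed_graph m).
Local Notation V := 'I_m.

Definition trek_top (tr : trek m) : V :=
  match tr with TBi l0 _ _ _ => l0 | TTop t _ _ => t end.

Definition left_tail (tr : trek m) : seq V :=
  match tr with TBi _ ls _ _ => ls | TTop _ ls _ => ls end.

Definition truncate (tr : trek m) : trek m :=
  match tr with
  | TBi l0 _ r0 rs => TBi l0 [::] r0 rs
  | TTop t _ rs => TTop t [::] rs
  end.

Lemma trek_left_tail tr : is_trek G tr ->
  path (Dir G) (trek_top tr) (left_tail tr) /\
  trek_source tr = last (trek_top tr) (left_tail tr).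
Proof. by case: tr => [l0 ls r0 rs|t ls rs] /= => [/and3P[]|/andP[]]. Qed.

Lemma trek_top_Left tr : trek_top tr \in Left tr.
Proof. by case: tr => [l0 ls r0 rs|t ls rs]; rewrite /= inE mem_head. Qed.

(* A half-trek has a single Left node, so its source is its top. *)
Lemma half_trek_source tr : is_half_trek G tr -> trek_source tr = trek_top tr.
Proof.
case/andP=> _ /cards1P[x Lx].
have src_Left : trek_source tr \in Left tr.
  by case: tr Lx => [l0 ls r0 rs|t ls rs] _; rewrite /= inE mem_last.
have := trek_top_Left tr.
by rewrite Lx !inE in src_Left * => /eqP->; rewrite (eqP src_Left).
Qed.

Lemma truncate_half_trek tr : is_trek G tr -> is_half_trek G (truncate tr).
Proof.
by case: tr => [l0 ls r0 rs|t ls rs] /= => [/and3P[bid _ r_path]|/andP[_ r_path]];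
  rewrite /is_half_trek /= set_seq1 cards1 ?bid r_path.
Qed.

Lemma truncate_source tr : trek_source (truncate tr) = trek_top tr.
Proof. by case: tr. Qed.

Lemma truncate_target tr : trek_target (truncate tr) = trek_target tr.
Proof. by case: tr. Qed.

Lemma Left_truncate tr : Left (truncate tr) \subset Left tr.
Proof.
by case: tr => [l0 ls r0 rs|t ls rs]; apply/subsetP => x; rewrite /= !inE => ->.
Qed.

Lemma Right_truncate tr : Right (truncate tr) = Right tr.
Proof. by case: tr. Qed.

Lemma no_sided_intersection_uniq_tops ts :
  no_sided_intersection ts -> uniq (map trek_top ts).
Proof.
elim: ts => //= a ts IH; rewrite /no_sided_intersection /= => /andP[a_ts ts_nsi].
rewrite IH // andbT; apply/negP => /mem_map_In[b b_ts top_ab].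
have /andP[disjL _] := all_In a_ts b_ts.
by move: (disjointFr disjL (trek_top_Left a)); rewrite top_ab trek_top_Left.
Qed.

Lemma no_sided_intersection_truncate ts :
  no_sided_intersection ts -> no_sided_intersection (map truncate ts).
Proof.
rewrite /no_sided_intersection pairwise_map.
apply: sub_pairwise => a b /andP[disjL disjR].
rewrite /= !Right_truncate disjR andbT.
exact: disjointW (Left_truncate a) (Left_truncate b) disjL.
Qed.

Lemma truncate_trek_system ts X Y :
  trek_system G ts X Y -> no_sided_intersection ts ->
  [/\ trek_system G (map truncate ts) [set x in map trek_top ts] Y,
      all (is_half_trek G) (map truncate ts)
    & no_sided_intersection (map truncate ts)].
Proof.
move=> [ts_treks _ _ uniq_tgt tgt_Y] nsi.
have src : map (@trek_source m) (map truncate ts) = map trek_top ts.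
  by rewrite -map_comp; apply: eq_map => tr; rewrite /= truncate_source.
have tgt : map (@trek_target m) (map truncate ts) = map (@trek_target m) ts.
  by rewrite -map_comp; apply: eq_map => tr; rewrite /= truncate_target.
have halves : all (is_half_trek G) (map truncate ts).
  by rewrite all_map; apply: sub_all ts_treks => tr; apply: truncate_half_trek.
split; [split|exact: halves|exact: no_sided_intersection_truncate].
- by apply: sub_all halves => tr /andP[].
- by rewrite src no_sided_intersection_uniq_tops.
- by rewrite src.
- by rewrite tgt.
- by rewrite tgt.
Qed.

Lemma trek_system_card ts X Y :
  trek_system G ts X Y -> #|X| = size ts /\ #|Y| = size ts.
Proof.
move=> [_ uniq_src <- uniq_tgt <-].
by rewrite !cardsE (card_uniqP uniq_src) (card_uniqP uniq_tgt) !size_map.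
Qed.

Definition half_trek_reachable (v w : V) : Prop :=
  exists tr, [/\ is_half_trek G tr, trek_source tr = v & trek_target tr = w].

Lemma htr_reachable v w : htr G v w -> half_trek_reachable v w.
Proof. by case. Qed.

Lemma reachable_extend v y ls :
  half_trek_reachable v y -> path (Dir G) y ls ->
  half_trek_reachable v (last y ls).
Proof.
move=> [[l0 ls0 r0 rs|t ls0 rs] [/andP[tr_trek tr_card] tr_src <-]] y_ls.
- exists (TBi l0 ls0 r0 (rs ++ ls)); split; rewrite //= ?last_cat //.
  move: tr_trek => /and3P[bid l_path r_path].
  by rewrite /is_half_trek tr_card /= bid l_path cat_path r_path y_ls.
- exists (TTop t ls0 (rs ++ ls)); split; rewrite //= ?last_cat //.
  move: tr_trek => /andP[l_path r_path].
  by rewrite /is_half_trek tr_card /= l_path cat_path r_path y_ls.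
Qed.

Lemma reachable_base v y : y \in v |: sib G v -> half_trek_reachable v y.
Proof.
rewrite !inE => /orP[/eqP->|sib_y].
- by exists (TTop v [::] [::]); rewrite /is_half_trek /= set_seq1 cards1.
- exists (TBi v [::] y [::]).
  by rewrite /is_half_trek /= set_seq1 cards1 Bid_sym sib_y.
Qed.

End Truncation.

Section WeakCriterion.
Variables (m : nat) (G : mixed_graph m) (v : 'I_m) (W P : {set 'I_m}).
Variable ts : seq (trek m).
Hypothesis W_disj : [disjoint W & v |: sib G v].
Hypothesis ts_system : trek_system G ts W P.
Hypothesis ts_half : forall tr, List.In tr ts ->
  htr G v (trek_source tr) -> is_half_trek G tr.

Local Notation tops := [set x in map (@trek_top m) ts].

Lemma source_in_W tr : List.In tr ts -> trek_source tr \in W.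
Proof. by case: ts_system => _ _ <- _ _ ts_tr; rewrite inE In_mem_map. Qed.

Lemma reachable_top_source tr : List.In tr ts ->
  half_trek_reachable G v (trek_top tr) -> trek_source tr = trek_top tr.
Proof.
move=> ts_tr reach_top.
case half: (is_half_trek G tr); first exact: half_trek_source half.
have [ts_treks _ _ _ _] := ts_system.
have [tail_path src_last] := trek_left_tail (all_In ts_treks ts_tr).
have src_htr : htr G v (trek_source tr).
  split; first by rewrite (disjointFr W_disj (source_in_W ts_tr)).
  by rewrite src_last; apply: reachable_extend.
by rewrite ts_half in half.
Qed.

Lemma reachable_top_in_W tr : List.In tr ts ->
  half_trek_reachable G v (trek_top tr) -> trek_top tr \in W.
Proof. by move=> ts_tr /(reachable_top_source ts_tr) <-; apply: source_in_W. Qed.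

(* Tops avoid {v} ∪ sib(v): such a top would be a reachable member of W. *)
Lemma tops_disjoint : [disjoint tops & v |: sib G v].
Proof.
rewrite disjoint_sym disjoint_subset; apply/subsetP => y sib_y.
rewrite !inE; apply/negP => /mem_map_In[tr ts_tr y_top].
have y_W : y \in W.
  by rewrite y_top reachable_top_in_W // -y_top; apply: reachable_base.
by rewrite (disjointFr W_disj y_W) in sib_y.
Qed.

(* Tops and sources agree on htr(v): a top in htr(v) is a source, and a
   source in htr(v) belongs to a half-trek, hence is a top. *)
Lemma tops_htr w : (w \in tops /\ htr G v w) <-> (w \in W /\ htr G v w).
Proof.
split=> -[w_in htr_w]; split=> //.
- move: w_in; rewrite inE => /mem_map_In[tr ts_tr w_top].
  by rewrite w_top reachable_top_in_W // -w_top; apply: htr_reachable.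
- case: ts_system w_in => _ _ <- _ _; rewrite !inE.
  case/mem_map_In=> tr ts_tr w_src.
  have half : is_half_trek G tr by apply: ts_half; rewrite -?w_src.
  by rewrite w_src (half_trek_source half) In_mem_map.
Qed.

End WeakCriterion.

Theorem mainTheorem5 (m : nat) (G : mixed_graph m) (v : 'I_m) (W : {set 'I_m}) :
  weak_HTC G W v ->
  exists Y : {set 'I_m},
    HTC G Y v /\ (forall w, (w \in Y /\ htr G v w) <-> (w \in W /\ htr G v w)).
Proof.
move=> [_ W_disj [ts [ts_system ts_nsi ts_half]]].
have [trunc_system trunc_half trunc_nsi] := truncate_trek_system ts_system ts_nsi.
have [card_tops card_pa] := trek_system_card trunc_system.
exists [set x in map (@trek_top m) ts]; split; last exact: tops_htr W_disj ts_system ts_half.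
split; first by rewrite card_tops card_pa.
- exact: tops_disjoint W_disj ts_system ts_half.
- by exists (map (@truncate m) ts).
Qed.
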